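(* Assume $J$ is nondecreasing on $\Theta$. Define $\Phi(\theta_0)=\int_{\theta_0}^{\bar\theta}J(\theta)F(\theta)\,dF(\theta)+v(\theta_0)(1-F(\theta_0))$ for $\theta_0\in[0,\bar\theta)$, and let $\theta_0^*\in\arg\max_{\theta_0\in[0,\bar\theta)}\Phi(\theta_0)$. Then the pair $(\theta_0^*,s^* )$ with $s^*(\theta)=F(\theta)$ for $\theta\in[\theta_0^*,\bar\theta]$ maximizes $$R(\theta_0,s)=\int_{\theta_0}^{\bar\theta}J(\theta)s(\theta)\,dF(\theta)+v(\theta_0)(1-F(\theta_0))$$ over all $\theta_0\in[0,\bar\theta)$ and $s\in\mathcal S(\theta_0)$; i.e., the revenue-maximizing mechanism excludes types below $\theta_0^*$ and fully separates types above $\theta_0^*$.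
   Context: Let $0<\bar\theta<\infty$, $\Theta=[0,\bar\theta]$, $F$ a cdf on $\Theta$ with continuous, strictly positive density $f$, $dF=f\,d\theta$, and $J(\theta)=\theta-\frac{1-F(\theta)}{f(\theta)}$. The intrinsic value $v:\Theta\to[0,\infty)$ is twice continuously differentiable with $v'\ge0$, $v''\le0$. For $\theta_0\in[0,\bar\theta)$ and bounded measurable $a,b:[\theta_0,\bar\theta]\to\mathbb R$, write $b\in\mathrm{MPS}(a)$ on $[\theta_0,\bar\theta]$ if $\int_x^{\bar\theta}b\,dF\le\int_x^{\bar\theta}a\,dF$ for all $x\in[\theta_0,\bar\theta]$, with equality at $x=\theta_0$. Let $\mathcal S(\theta_0)$ be the set of nondecreasing $s:[\theta_0,\bar\theta]\to[0,1]$ with $s\in\mathrm{MPS}(F)$ on $[\theta_0,\bar\theta]$ (the feasible interim statuses of participants when types below $\theta_0$ are excluded). $R(\theta_0,s)$ is the seller's expected revenue of the optimal-price incentive-compatible, individually rational mechanism with participation cutoff $\theta_0$ and interim status $s$. *)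

From Stdlib Require Import Reals Lra.
From Coquelicot Require Import Coquelicot.
Open Scope R_scope.

Definition cont_on (a b : R) (g : R -> R) : Prop :=
  forall x, a <= x <= b ->
    forall eps : R, 0 < eps -> exists delta : R, 0 < delta /\
      forall y, a <= y <= b -> Rabs (y - x) < delta -> Rabs (g y - g x) < eps.

Definition cdf_with_density (tb : R) (F f : R -> R) : Prop :=
  cont_on 0 tb f /\
  (forall x, 0 <= x <= tb -> 0 < f x) /\
  (forall x, 0 <= x <= tb -> F x = RInt f 0 x) /\
  F tb = 1.

Definition Jvv (F f : R -> R) (x : R) : R := x - (1 - F x) / f x.

(* v : Θ -> [0,∞) twice continuously differentiable on [0,tb], v' >= 0, v'' <= 0.
   C^2 on the closed interval: derivatives on the interior, with v, v', v''
   continuous (extending continuously) on [0,tb]. *)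
Definition intrinsic_value (tb : R) (v : R -> R) : Prop :=
  (forall x, 0 <= x <= tb -> 0 <= v x) /\
  exists v1 v2 : R -> R,
    (forall x, 0 < x < tb -> is_derive v x (v1 x) /\ is_derive v1 x (v2 x)) /\
    cont_on 0 tb v /\ cont_on 0 tb v1 /\ cont_on 0 tb v2 /\
    (forall x, 0 <= x <= tb -> 0 <= v1 x) /\
    (forall x, 0 <= x <= tb -> v2 x <= 0).

(* ∫_x^tb g dF = ∫_x^tb g(θ) f(θ) dθ *)
Definition intF (f g : R -> R) (x tb : R) : R := RInt (fun t => g t * f t) x tb.

Definition MPS (tb : R) (f : R -> R) (t0 : R) (b a : R -> R) : Prop :=
  (forall x, t0 <= x <= tb -> intF f b x tb <= intF f a x tb) /\
  intF f b t0 tb = intF f a t0 tb.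

Definition feasible (tb : R) (F f : R -> R) (t0 : R) (s : R -> R) : Prop :=
  (forall x y, t0 <= x -> x <= y -> y <= tb -> s x <= s y) /\
  (forall x, t0 <= x <= tb -> 0 <= s x <= 1) /\
  MPS tb f t0 s F.

Definition revenue (tb : R) (F f v : R -> R) (t0 : R) (s : R -> R) : R :=
  intF f (fun t => Jvv F f t * s t) t0 tb + v t0 * (1 - F t0).

Definition Phi (tb : R) (F f v : R -> R) (t0 : R) : R :=
  intF f (fun t => Jvv F f t * F t) t0 tb + v t0 * (1 - F t0).

(* For a feasible (t0, s), R(t0, F) - R(t0, s) = ∫ J (F - s) dF.  The MPS constraint says that
   F - s has nonnegative upper tails ∫_c (F - s) dF and zero total integral, so Abel's
   inequality (the second mean value theorem) for the nondecreasing weight J makes this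
   difference nonnegative: R(t0, s) <= Φ(t0) <= Φ(t0star) = R(t0star, F).  Abel's inequality
   is proved by writing a nondecreasing weight as a uniform limit of staircases, i.e. of
   positive combinations of indicators of upper level sets, against each of which the
   integral is an upper tail. *)

From Stdlib Require Import Reals Lra.
From Coquelicot Require Import Coquelicot.
Open Scope R_scope.

(* Coquelicot's generic lemmas, specialized to [R] so that they unify with [+], [-] and [*]. *)
Section RealRInt.

Variables (f g : R -> R) (a b c : R).

Lemma ex_RInt_plusR : ex_RInt f a b -> ex_RInt g a b -> ex_RInt (fun x => f x + g x) a b.
Proof. apply (@ex_RInt_plus R_NormedModule). Qed.

Lemma ex_RInt_minusR : ex_RInt f a b -> ex_RInt g a b -> ex_RInt (fun x => f x - g x) a b.
Proof. apply (@ex_RInt_minus R_NormedModule). Qed.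

Lemma ex_RInt_scalR (l : R) : ex_RInt f a b -> ex_RInt (fun x => l * f x) a b.
Proof. apply (@ex_RInt_scal R_NormedModule). Qed.

Lemma RInt_plusR : ex_RInt f a b -> ex_RInt g a b ->
  RInt (fun x => f x + g x) a b = RInt f a b + RInt g a b.
Proof. apply (@RInt_plus R_CompleteNormedModule). Qed.

Lemma RInt_minusR : ex_RInt f a b -> ex_RInt g a b ->
  RInt (fun x => f x - g x) a b = RInt f a b - RInt g a b.
Proof. apply (@RInt_minus R_CompleteNormedModule). Qed.

Lemma RInt_scalR (l : R) : ex_RInt f a b -> RInt (fun x => l * f x) a b = l * RInt f a b.
Proof. apply (@RInt_scal R_CompleteNormedModule). Qed.

Lemma RInt_ChaslesR : ex_RInt f a b -> ex_RInt f b c -> RInt f a b + RInt f b c = RInt f a c.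
Proof. apply (@RInt_Chasles R_CompleteNormedModule). Qed.

Lemma ex_RInt_Chasles_1R : a <= b <= c -> ex_RInt f a c -> ex_RInt f a b.
Proof. apply (@ex_RInt_Chasles_1 R_CompleteNormedModule). Qed.

Lemma ex_RInt_Chasles_2R : a <= b <= c -> ex_RInt f a c -> ex_RInt f b c.
Proof. apply (@ex_RInt_Chasles_2 R_CompleteNormedModule). Qed.

Lemma ex_RInt_ext_le : a <= b -> (forall x, a < x < b -> f x = g x) ->
  ex_RInt f a b -> ex_RInt g a b.
Proof. intros Hab Hfg; apply ex_RInt_ext; rewrite Rmin_left, Rmax_right by lra; exact Hfg. Qed.

Lemma RInt_ext_le : a <= b -> (forall x, a < x < b -> f x = g x) -> RInt f a b = RInt g a b.
Proof. intros Hab Hfg; apply RInt_ext; rewrite Rmin_left, Rmax_right by lra; exact Hfg. Qed.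

Lemma ex_RInt_bounded : a <= b -> ex_RInt f a b ->
  exists M, 0 <= M /\ forall t, a <= t <= b -> Rabs (f t) <= M.
Proof.
  intros Hab Hf. destruct (ex_RInt_ub f a b Hf) as [M HM].
  exists (Rabs M). split; [apply Rabs_pos|]. intros t Ht.
  pose proof (Rle_abs M).
  assert (Rabs (f t) <= M); [|lra].
  apply HM. rewrite Rmin_left, Rmax_right; lra.
Qed.

End RealRInt.

Lemma RInt_zero (a b : R) : RInt (fun _ => 0) a b = 0.
Proof. rewrite RInt_const. apply Rmult_0_r. Qed.

Lemma exists_nat_gt (r : R) : exists n : nat, r < INR n.
Proof.
  destruct (nfloor_ex (Rmax 0 r) (Rmax_l 0 r)) as [n [_ Hn]].
  exists (S n). rewrite S_INR. pose proof (Rmax_r 0 r). lra.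
Qed.

Lemma inv_succ_eventually_lt (c eps : R) : 0 < eps ->
  exists n0 : nat, forall n, (n0 <= n)%nat -> c / (INR n + 1) < eps.
Proof.
  intros Heps. destruct (exists_nat_gt (c / eps)) as [n0 Hn0].
  exists n0. intros n Hn. apply le_INR in Hn. pose proof (pos_INR n).
  apply Rmult_lt_reg_r with (INR n + 1); [lra|].
  replace (c / (INR n + 1) * (INR n + 1)) with c by (field; lra).
  assert (c = c / eps * eps) by (field; lra). nra.
Qed.

Definition clamp (a b x : R) : R := Rmax a (Rmin b x).

Section Clamp.

Variables (a b : R).
Hypothesis Hab : a <= b.

Lemma clamp_in x : a <= clamp a b x <= b.
Proof. unfold clamp, Rmax, Rmin; repeat destruct Rle_dec; lra. Qed.

Lemma clamp_id x : a <= x <= b -> clamp a b x = x.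
Proof. unfold clamp, Rmax, Rmin; repeat destruct Rle_dec; lra. Qed.

Lemma clamp_le_compat x y : x <= y -> clamp a b x <= clamp a b y.
Proof. unfold clamp, Rmax, Rmin; repeat destruct Rle_dec; lra. Qed.

Lemma clamp_lipschitz x y : Rabs (clamp a b y - clamp a b x) <= Rabs (y - x).
Proof. unfold clamp, Rmax, Rmin, Rabs; repeat destruct Rle_dec; repeat destruct Rcase_abs; lra. Qed.

End Clamp.

Lemma ex_RInt_cont_on (g : R -> R) a b : a <= b -> cont_on a b g -> ex_RInt g a b.
Proof.
  intros Hab Hg.
  apply ex_RInt_ext_le with (fun x => g (clamp a b x)); [lra| |].
  { intros x Hx. rewrite clamp_id; lra. }
  apply (ex_RInt_continuous (V := R_CompleteNormedModule)). intros z _.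
  apply filterlim_locally. intros eps.
  destruct (Hg (clamp a b z) (clamp_in a b Hab z) eps (cond_pos eps)) as [d [Hd Hgd]].
  exists (mkposreal d Hd). intros y Hy. change (Rabs (y - z) < d) in Hy.
  change (Rabs (g (clamp a b y) - g (clamp a b z)) < eps).
  apply Hgd; [apply clamp_in; lra|].
  pose proof (clamp_lipschitz a b Hab z y). lra.
Qed.

Definition nondecreasing_on (a b : R) (phi : R -> R) : Prop :=
  forall x y, a <= x -> x <= y -> y <= b -> phi x <= phi y.

Definition level_indicator (phi : R -> R) (L x : R) : R :=
  if Rle_dec L (phi x) then 1 else 0.

Fixpoint staircase (d : R) (N : nat) (y : R) : R :=
  match N with
  | O => 0
  | S k => staircase d k y + d * (if Rle_dec (INR (S k) * d) y then 1 else 0)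
  end.

Lemma staircase_spec d N y : 0 < d -> 0 <= y ->
  (y <= INR N * d -> y - d <= staircase d N y <= y) /\
  (INR N * d <= y -> staircase d N y = INR N * d).
Proof.
  intros Hd Hy. induction N as [|k [IH_below IH_above]].
  - simpl. split; intros; lra.
  - cbn [staircase]. rewrite S_INR in *.
    destruct Rle_dec; [rewrite IH_above by lra; split; intros; lra|].
    split; [|intros; lra]. intros Hk.
    destruct (Rle_or_lt y (INR k * d)) as [Hyk|Hyk]; [specialize (IH_below Hyk); lra|].
    rewrite IH_above by lra. lra.
Qed.

Lemma staircase_close d N y : 0 < d -> 0 <= y <= INR N * d ->
  Rabs (staircase d N y - y) <= d.
Proof.
  intros Hd Hy. destruct (staircase_spec d N y Hd (proj1 Hy)) as [Hbelow _].
  specialize (Hbelow (proj2 Hy)). unfold Rabs; destruct Rcase_abs; lra.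
Qed.

Section MonotoneWeight.

Variables (phi : R -> R) (a b : R).
Hypothesis Hab : a <= b.
Hypothesis phi_mono : forall x y, x <= y -> phi x <= phi y.

(* The upper level set of [phi] is a right half-line; [c] is its left end, clipped to [a,b]. *)
Lemma RInt_level_indicator_mult (h : R -> R) L : ex_RInt h a b ->
  ex_RInt (fun x => level_indicator phi L x * h x) a b /\
  exists c, a <= c <= b /\ RInt (fun x => level_indicator phi L x * h x) a b = RInt h c b.
Proof.
  intros Hh.
  set (E := fun x => x = a \/ (x <= b /\ phi x < L)).
  destruct (completeness E) as [c [Hub Hlub]].
  { exists b. intros x [->|[? ?]]; lra. }
  { exists a. left. reflexivity. }
  assert (Hac : a <= c) by (apply Hub; left; reflexivity).
  assert (Hcb : c <= b) by (apply Hlub; intros x [->|[? ?]]; lra).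
  assert (above : forall x, c < x < b -> level_indicator phi L x * h x = h x).
  { intros x Hx. unfold level_indicator. destruct Rle_dec as [|Hlt]; [ring|].
    assert (Ex : E x) by (right; split; lra). specialize (Hub x Ex). lra. }
  assert (below : forall x, a < x < c -> 0 = level_indicator phi L x * h x).
  { intros x Hx. unfold level_indicator. destruct Rle_dec as [Hge|]; [|ring].
    assert (c <= x); [|lra]. apply Hlub. intros y [->|[_ Hy]]; [lra|].
    destruct (Rle_or_lt y x) as [|Hxy]; [assumption|].
    specialize (phi_mono x y (Rlt_le _ _ Hxy)). lra. }
  assert (Hhc : ex_RInt h c b) by (apply ex_RInt_Chasles_2R with a; [lra|exact Hh]).
  assert (E_left : ex_RInt (fun x => level_indicator phi L x * h x) a c).
  { apply ex_RInt_ext_le with (fun _ => 0); [lra|exact below|apply ex_RInt_const]. }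
  assert (E_right : ex_RInt (fun x => level_indicator phi L x * h x) c b).
  { apply ex_RInt_ext_le with h; [lra|intros; symmetry; apply above; lra|exact Hhc]. }
  split; [apply ex_RInt_Chasles with c; assumption|].
  exists c. split; [lra|].
  rewrite <- (RInt_ChaslesR _ a c b E_left E_right).
  rewrite <- (RInt_ext_le (fun _ => 0) _ a c), RInt_zero by assumption.
  rewrite (RInt_ext_le _ h c b) by (assumption || (intros; apply above; lra)).
  apply Rplus_0_l.
Qed.

Lemma staircase_unfold d k x :
  staircase d (S k) (phi x) = staircase d k (phi x) + d * level_indicator phi (INR (S k) * d) x.
Proof. reflexivity. Qed.

Lemma ex_RInt_staircase_mult (h : R -> R) d N : ex_RInt h a b ->
  ex_RInt (fun x => staircase d N (phi x) * h x) a b.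
Proof.
  intros Hh. induction N as [|k IH].
  - apply ex_RInt_ext_le with (fun _ => 0); [lra| |apply ex_RInt_const].
    intros; simpl; ring.
  - destruct (RInt_level_indicator_mult h (INR (S k) * d) Hh) as [Hlev _].
    apply ex_RInt_ext_le with
      (fun x => staircase d k (phi x) * h x + d * (level_indicator phi (INR (S k) * d) x * h x));
      [lra| |apply ex_RInt_plusR; [exact IH|apply ex_RInt_scalR, Hlev]].
    intros x _. rewrite staircase_unfold. ring.
Qed.

Lemma RInt_staircase_mult_ge0 (h : R -> R) d N : ex_RInt h a b -> 0 <= d ->
  (forall c, a <= c <= b -> 0 <= RInt h c b) ->
  0 <= RInt (fun x => staircase d N (phi x) * h x) a b.
Proof.
  intros Hh Hd Htail. induction N as [|k IH].
  - rewrite (RInt_ext_le _ (fun _ => 0)); [rewrite RInt_zero; lra|lra|].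
    intros; simpl; ring.
  - destruct (RInt_level_indicator_mult h (INR (S k) * d) Hh) as [Hlev [c [Hc Hlevc]]].
    rewrite (RInt_ext_le _
      (fun x => staircase d k (phi x) * h x + d * (level_indicator phi (INR (S k) * d) x * h x)));
      [|lra|intros; rewrite staircase_unfold; ring].
    rewrite RInt_plusR;
      [|apply ex_RInt_staircase_mult, Hh|apply ex_RInt_scalR, Hlev].
    rewrite RInt_scalR, Hlevc by exact Hlev.
    specialize (Htail c Hc). pose proof (Rmult_le_pos _ _ Hd Htail). lra.
Qed.

Variable D : R.
Hypothesis phi_range : forall x, 0 <= phi x <= D.

(* The staircases with steps [d_n = (D+1)/(n+1)] converge to [phi] uniformly. *)
Lemma ex_RInt_bounded_monotone_mult (h : R -> R) : ex_RInt h a b -> ex_RInt (fun x => phi x * h x) a b.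
Proof.
  intros Hh.
  set (hc := fun x => h (clamp a b x)).
  assert (hc_eq : forall x, a < x < b -> hc x = h x) by (intros; unfold hc; rewrite clamp_id; lra).
  assert (Hhc : ex_RInt hc a b).
  { apply ex_RInt_ext_le with h; [lra|intros; symmetry; auto|exact Hh]. }
  destruct (ex_RInt_bounded h a b Hab Hh) as [M [HM0 HM]].
  assert (hc_bound : forall x, Rabs (hc x) <= M) by (intros x; apply HM, clamp_in, Hab).
  assert (HD : 0 <= D) by (pose proof (phi_range 0); lra).
  set (d := fun n : nat => (D + 1) / (INR n + 1)).
  assert (d_pos : forall n, 0 < d n).
  { intros n. pose proof (pos_INR n). apply Rdiv_lt_0_compat; lra. }
  assert (close : forall n x, Rabs (staircase (d n) (S n) (phi x) - phi x) <= d n).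
  { intros n x. apply staircase_close; [apply d_pos|].
    replace (INR (S n) * d n) with (D + 1)
      by (rewrite S_INR; unfold d; pose proof (pos_INR n); field; lra).
    pose proof (phi_range x); lra. }
  destruct (filterlim_RInt (V := R_CompleteNormedModule)
     (fun n x => staircase (d n) (S n) (phi x) * hc x) a b eventually eventually_filter
     (fun x => phi x * hc x)
     (fun n => RInt (fun x => staircase (d n) (S n) (phi x) * hc x) a b)) as [I [_ HI]].
  - intros n. apply (RInt_correct (V := R_CompleteNormedModule)), ex_RInt_staircase_mult, Hhc.
  - apply filterlim_locally. intros eps.
    destruct (inv_succ_eventually_lt ((D + 1) * M) eps (cond_pos eps)) as [n0 Hn0].
    exists n0. intros n Hn t.
    change (Rabs (staircase (d n) (S n) (phi t) * hc t - phi t * hc t) < eps).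
    replace (staircase (d n) (S n) (phi t) * hc t - phi t * hc t)
      with ((staircase (d n) (S n) (phi t) - phi t) * hc t) by ring.
    rewrite Rabs_mult.
    apply Rle_lt_trans with (d n * M).
    + apply Rmult_le_compat; auto using Rabs_pos.
    + replace (d n * M) with ((D + 1) * M / (INR n + 1))
        by (unfold d; pose proof (pos_INR n); field; lra).
      auto.
  - apply ex_RInt_ext_le with (fun x => phi x * hc x); [lra| |exists I; exact HI].
    intros x Hx. rewrite hc_eq by exact Hx. reflexivity.
Qed.

(* Compare with a staircase uniformly close to [phi], whose integral against [h] is nonnegative. *)
Lemma RInt_bounded_monotone_mult_ge0 (h : R -> R) : ex_RInt h a b ->
  (forall c, a <= c <= b -> 0 <= RInt h c b) ->
  0 <= RInt (fun x => phi x * h x) a b.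
Proof.
  intros Hh Htail.
  destruct (ex_RInt_bounded h a b Hab Hh) as [M [HM0 HM]].
  assert (HD : 0 <= D) by (pose proof (phi_range 0); lra).
  apply Rle_plus_epsilon. intros eps Heps.
  assert (Hden : 0 < (b - a) * M + 1) by nra.
  set (d := eps / ((b - a) * M + 1)).
  assert (Hd : 0 < d) by (apply Rdiv_lt_0_compat; lra).
  assert (Hdeps : d * ((b - a) * M + 1) = eps) by (unfold d; field; lra).
  destruct (exists_nat_gt (D / d)) as [N HN].
  assert (HND : D <= INR N * d).
  { assert (D = D / d * d) by (field; lra). nra. }
  assert (Happrox : Rabs (RInt (fun x => phi x * h x - staircase d N (phi x) * h x) a b)
                    <= (b - a) * (d * M)).
  { apply abs_RInt_le_const; [lra| |].
    - apply ex_RInt_minusR; [apply ex_RInt_bounded_monotone_mult|apply ex_RInt_staircase_mult]; exact Hh.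
    - intros t Ht.
      replace (phi t * h t - staircase d N (phi t) * h t)
        with ((phi t - staircase d N (phi t)) * h t) by ring.
      rewrite Rabs_mult. apply Rmult_le_compat; auto using Rabs_pos.
      rewrite Rabs_minus_sym. apply staircase_close; [exact Hd|].
      pose proof (phi_range t); lra. }
  rewrite RInt_minusR in Happrox;
    [|apply ex_RInt_bounded_monotone_mult, Hh|apply ex_RInt_staircase_mult, Hh].
  pose proof (RInt_staircase_mult_ge0 h d N Hh (Rlt_le _ _ Hd) Htail).
  apply Rabs_le_between in Happrox.
  assert ((b - a) * (d * M) <= d * ((b - a) * M)) by (right; ring).
  assert (d * ((b - a) * M) < eps) by (rewrite <- Hdeps; nra).
  lra.
Qed.

End MonotoneWeight.

Lemma nondecreasing_on_clamp (phi : R -> R) a b : a <= b -> nondecreasing_on a b phi ->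
  (forall x y, x <= y -> phi (clamp a b x) - phi a <= phi (clamp a b y) - phi a) /\
  (forall x, 0 <= phi (clamp a b x) - phi a <= phi b - phi a).
Proof.
  intros Hab Hphi. split.
  - intros x y Hxy. pose proof (clamp_in a b Hab x). pose proof (clamp_in a b Hab y).
    pose proof (clamp_le_compat a b Hab x y Hxy).
    assert (phi (clamp a b x) <= phi (clamp a b y)) by (apply Hphi; lra). lra.
  - intros x. pose proof (clamp_in a b Hab x).
    assert (phi a <= phi (clamp a b x)) by (apply Hphi; lra).
    assert (phi (clamp a b x) <= phi b) by (apply Hphi; lra). lra.
Qed.

Section NondecreasingWeight.

Variables (phi h : R -> R) (a b : R).
Hypothesis Hab : a <= b.
Hypothesis phi_nondecr : nondecreasing_on a b phi.
Hypothesis h_int : ex_RInt h a b.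

Let psi x := phi (clamp a b x) - phi a.

Let phi_split x : a < x < b -> phi x * h x = psi x * h x + phi a * h x.
Proof. intros Hx. unfold psi. rewrite clamp_id by lra. ring. Qed.

Let psi_h_int : ex_RInt (fun x => psi x * h x) a b.
Proof.
  destruct (nondecreasing_on_clamp phi a b Hab phi_nondecr) as [Hmono Hrange].
  exact (ex_RInt_bounded_monotone_mult psi a b Hab Hmono _ Hrange h h_int).
Qed.

Lemma ex_RInt_nondecreasing_mult : ex_RInt (fun x => phi x * h x) a b.
Proof.
  apply ex_RInt_ext_le with (fun x => psi x * h x + phi a * h x);
    [lra|intros; symmetry; apply phi_split; lra|].
  apply ex_RInt_plusR; [exact psi_h_int|apply ex_RInt_scalR, h_int].
Qed.

Lemma RInt_nondecreasing_mult_ge : (forall c, a <= c <= b -> 0 <= RInt h c b) ->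
  phi a * RInt h a b <= RInt (fun x => phi x * h x) a b.
Proof.
  intros Htail.
  destruct (nondecreasing_on_clamp phi a b Hab phi_nondecr) as [Hmono Hrange].
  rewrite (RInt_ext_le (fun x => phi x * h x) (fun x => psi x * h x + phi a * h x))
    by (lra || apply phi_split).
  rewrite RInt_plusR, RInt_scalR; [|exact h_int|exact psi_h_int|apply ex_RInt_scalR, h_int].
  pose proof (RInt_bounded_monotone_mult_ge0 psi a b Hab Hmono _ Hrange h h_int Htail). lra.
Qed.

End NondecreasingWeight.

Section Revenue.

Variables (tb : R) (F f : R -> R).
Hypothesis tb_ge0 : 0 <= tb.
Hypothesis cdf : cdf_with_density tb F f.

Lemma density_ex_RInt : ex_RInt f 0 tb.
Proof. destruct cdf as [Hcont _]. exact (ex_RInt_cont_on f 0 tb tb_ge0 Hcont). Qed.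

Lemma cdf_nondecreasing : nondecreasing_on 0 tb F.
Proof.
  destruct cdf as [_ [Hpos [HF _]]]. intros x y H0x Hxy Hytb.
  assert (Ex : ex_RInt f 0 x) by (apply ex_RInt_Chasles_1R with tb; [lra|exact density_ex_RInt]).
  assert (Exy : ex_RInt f x y).
  { apply ex_RInt_Chasles_1R with tb; [lra|].
    apply ex_RInt_Chasles_2R with 0; [lra|exact density_ex_RInt]. }
  rewrite (HF x), (HF y), <- (RInt_ChaslesR f 0 x y Ex Exy) by lra.
  assert (0 <= RInt f x y); [|lra].
  apply RInt_ge_0; [exact Hxy|exact Exy|intros z Hz; apply Rlt_le, Hpos; lra].
Qed.

Lemma cdf_range x : 0 <= x <= tb -> 0 <= F x <= 1.
Proof.
  destruct cdf as [_ [_ [HF HF1]]]. intros Hx.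
  assert (HF0 : F 0 = 0) by (rewrite HF by lra; apply (@RInt_point R_CompleteNormedModule)).
  pose proof (cdf_nondecreasing 0 x). pose proof (cdf_nondecreasing x tb). lra.
Qed.

Lemma feasible_cdf t0 : 0 <= t0 <= tb -> feasible tb F f t0 F.
Proof.
  intros Ht0. split; [|split].
  - intros x y Hx Hxy Hy. apply cdf_nondecreasing; lra.
  - intros x Hx. apply cdf_range; lra.
  - split; [intros; lra|reflexivity].
Qed.

Variable t0 : R.
Hypothesis t0_range : 0 <= t0 <= tb.

Let f_int : ex_RInt f t0 tb.
Proof. apply ex_RInt_Chasles_2R with 0; [lra|exact density_ex_RInt]. Qed.

Let F_nondecr : nondecreasing_on t0 tb F.
Proof. intros x y Hx Hxy Hy. apply cdf_nondecreasing; lra. Qed.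

(* [J f = t f - (1 - F)] needs [f > 0] on the interior. *)
Lemma ex_RInt_virtual_value_density : ex_RInt (fun t => Jvv F f t * f t) t0 tb.
Proof.
  destruct cdf as [_ [Hpos _]].
  apply ex_RInt_ext_le with (fun t => t * f t - (1 - F t * 1)); [lra| |].
  { intros x Hx. assert (0 < f x) by (apply Hpos; lra). unfold Jvv. field. lra. }
  apply ex_RInt_minusR.
  - apply ex_RInt_nondecreasing_mult; [lra|intros x y _ Hxy _; exact Hxy|exact f_int].
  - apply ex_RInt_minusR; [apply ex_RInt_const|].
    apply ex_RInt_nondecreasing_mult; [lra|exact F_nondecr|apply ex_RInt_const].
Qed.

Lemma ex_RInt_status_density (s : R -> R) : nondecreasing_on t0 tb s ->
  ex_RInt (fun t => s t * f t) t0 tb /\ ex_RInt (fun t => Jvv F f t * s t * f t) t0 tb.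
Proof.
  intros Hs. split; [apply ex_RInt_nondecreasing_mult; [lra|exact Hs|exact f_int]|].
  apply ex_RInt_ext_le with (fun t => s t * (Jvv F f t * f t)); [lra|intros; ring|].
  apply ex_RInt_nondecreasing_mult; [lra|exact Hs|exact ex_RInt_virtual_value_density].
Qed.

Lemma revenue_le_Phi (v s : R -> R) : nondecreasing_on 0 tb (Jvv F f) ->
  feasible tb F f t0 s -> revenue tb F f v t0 s <= Phi tb F f v t0.
Proof.
  intros HJ [Hs [_ [Htail Htotal]]].
  destruct (ex_RInt_status_density s Hs) as [Esf EJsf].
  destruct (ex_RInt_status_density F F_nondecr) as [EFf EJFf].
  set (g := fun t => F t * f t - s t * f t).
  assert (Eg : ex_RInt g t0 tb) by (apply ex_RInt_minusR; assumption).
  assert (g_total : RInt g t0 tb = 0).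
  { unfold g. rewrite RInt_minusR by assumption. unfold intF in Htotal. lra. }
  assert (g_tail : forall c, t0 <= c <= tb -> 0 <= RInt g c tb).
  { intros c Hc. unfold g.
    rewrite RInt_minusR by (apply ex_RInt_Chasles_2R with t0; assumption).
    specialize (Htail c Hc). unfold intF in Htail. lra. }
  assert (HJt0 : nondecreasing_on t0 tb (Jvv F f)) by (intros x y ? ? ?; apply HJ; lra).
  pose proof (RInt_nondecreasing_mult_ge (Jvv F f) g t0 tb (proj2 t0_range) HJt0 Eg g_tail)
    as Habel.
  rewrite g_total, Rmult_0_r in Habel.
  rewrite (RInt_ext_le _ (fun t => Jvv F f t * F t * f t - Jvv F f t * s t * f t)) in Habel
    by (lra || (intros; unfold g; ring)).
  rewrite RInt_minusR in Habel by assumption.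
  unfold revenue, Phi, intF. lra.
Qed.

End Revenue.

Theorem proposition1 (tb : R) (F f v : R -> R) (t0star : R) :
  0 < tb ->
  cdf_with_density tb F f ->
  intrinsic_value tb v ->
  (forall x y, 0 <= x -> x <= y -> y <= tb -> Jvv F f x <= Jvv F f y) ->
  0 <= t0star < tb ->
  (forall t0, 0 <= t0 < tb -> Phi tb F f v t0 <= Phi tb F f v t0star) ->
  feasible tb F f t0star F /\
  (forall t0 (s : R -> R), 0 <= t0 < tb -> feasible tb F f t0 s ->
     revenue tb F f v t0 s <= revenue tb F f v t0star F).
Proof.
  intros Htb Hcdf _ HJ Ht0star Hmax.
  split; [apply feasible_cdf; [lra|exact Hcdf|lra]|].
  intros t0 s Ht0 Hs.
  apply Rle_trans with (Phi tb F f v t0).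
  - apply revenue_le_Phi; [lra|exact Hcdf|lra|exact HJ|exact Hs].
  - exact (Hmax t0 Ht0).
Qed.
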